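(* Let $\alpha\approx1.465571$ be the real root of $x^3-x^2-1$ lying between $1$ and $2$. Every graph of pathwidth at most $1$ and order $n$ has at most $\alpha^n$ induced matchings. Moreover, the number of induced matchings of the path on $n$ vertices is at least $0.89\,\alpha^n+o(1)$; in particular it is $\Theta(\alpha^n)$.
   Context: An induced matching of a graph $G=(V,E)$ is here a set $D\subseteq V$ such that every vertex of $D$ has exactly one neighbour in $D$ (equivalently, the set of edges of $G[D]$ is a matching whose vertex set is $D$ and which is an induced subgraph); i.e. a $(\{1\},\mathbb{N})$-dominating set, where $D$ is $(\sigma,\rho)$-dominating if $|N(v)\cap D|\in\sigma$ for $v\in D$ and $|N(v)\cap D|\in\rho$ for $v\notin D$. The empty set counts. Order = number of vertices; pathwidth is the standard notion. *)

(* Simple graphs: symmetric irreflexive relation e on a finType T. *)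
From HB Require Import structures.
From mathcomp Require Import all_boot all_order all_algebra.
Set Implicit Arguments. Unset Strict Implicit. Unset Printing Implicit Defensive.
Import Order.TTheory GRing.Theory Num.Theory.

Definition nbrs_in (T : finType) (e : rel T) (D : {set T}) (v : T) : {set T} :=
  [set u in D | e v u].

Definition sr_dominating (T : finType) (e : rel T) (sigma rho : pred nat)
    (D : {set T}) : bool :=
  [forall v, if v \in D then sigma #|nbrs_in e D v| else rho #|nbrs_in e D v|].

Definition induced_matching (T : finType) (e : rel T) (D : {set T}) : bool :=
  sr_dominating e (pred1 1%N) predT D.

Definition num_induced_matchings (T : finType) (e : rel T) : nat :=
  #|[set D : {set T} | induced_matching e D]|.

Definition path_decomposition (T : finType) (e : rel T) (B : seq {set T}) : Prop :=
  [/\ (forall v : T, exists2 X, X \in B & v \in X),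
      (forall u v : T, e u v -> exists2 X, X \in B & (u \in X) && (v \in X)) &
      (forall (v : T) (i j k : nat), (i <= j <= k)%N -> (k < size B)%N ->
          v \in nth set0 B i -> v \in nth set0 B k -> v \in nth set0 B j)].

(* width of a decomposition = (max bag size) - 1; pathwidth <= w iff there is a
   path decomposition all of whose bags have size <= w + 1 *)
Definition pathwidth_le (T : finType) (e : rel T) (w : nat) : Prop :=
  exists2 B : seq {set T}, path_decomposition e B & forall X, X \in B -> (#|X| <= w.+1)%N.

Definition path_rel (n : nat) : rel 'I_n :=
  fun i j => ((val i).+1 == val j) || ((val j).+1 == val i).

From HB Require Import structures.
From mathcomp Require Import all_boot all_order all_algebra.
From mathcomp Require Import zify lra.
Import Order.TTheory GRing.Theory Num.Theory.
Set Implicit Arguments. Unset Strict Implicit. Unset Printing Implicit Defensive.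

(* Write f(S) for the number of induced matchings contained in the vertex set
   S.  A graph of pathwidth at most 1 is a forest, so every nonempty S has a
   vertex v with at most one neighbour in S.  An isolated v lies in no induced
   matching.  If u is the only neighbour of v, an induced matching through v
   contains the pair uv and nothing else adjacent to u, so
   f(S) <= f(S - v) + f(S - N[u]).  When u has a further neighbour the two terms
   are at most alpha^(n-1) and alpha^(n-3), whose sum is alpha^n; otherwise u is
   isolated in S - v and both terms are at most alpha^(n-2) <= alpha^n / 2.
   On the path, adding the last edge to the matchings of the first k - 3
   vertices gives f(P_k) >= f(P_(k-1)) + f(P_(k-3)); the solution of this
   recurrence exceeds 0.89 alpha^k as soon as it does at k = 9, 10, 11. *)

Section InducedMatchings.
Variables (T : finType) (e : rel T).
Hypotheses (esym : symmetric e) (eirr : irreflexive e).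

Lemma induced_matchingP (D : {set T}) :
  reflect (forall v, v \in D -> #|nbrs_in e D v| = 1%N) (induced_matching e D).
Proof.
apply: (iffP forallP) => [H v vD | H v]; first by move: (H v); rewrite vD => /eqP.
by case: ifPn => // /H ->.
Qed.

Lemma nbrs_inS (D S : {set T}) v : D \subset S -> nbrs_in e D v \subset nbrs_in e S v.
Proof.
by move=> /subsetP DS; apply/subsetP => x; rewrite !inE => /andP[/DS -> ->].
Qed.

Lemma nbrs_inU (D P : {set T}) x :
  nbrs_in e P x = set0 -> nbrs_in e (D :|: P) x = nbrs_in e D x.
Proof.
move=> /setP P0; apply/setP => y; have := P0 y; rewrite !inE andb_orl.
by case: (y \in P); rewrite ?orbF //= => ->; rewrite orbF.
Qed.

Lemma nbrs_inD (D P : {set T}) x :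
  nbrs_in e P x = set0 -> nbrs_in e (D :\: P) x = nbrs_in e D x.
Proof.
move=> /setP P0; apply/setP => y; have := P0 y; rewrite !inE.
by case: (y \in P) => //= ->; rewrite andbF.
Qed.

Definition im_in (S : {set T}) :=
  [set D : {set T} | (D \subset S) && induced_matching e D].
Definition nim_in (S : {set T}) := #|im_in S|.
Definition nim_at (S : {set T}) v := #|[set D in im_in S | v \in D]|.

Lemma num_induced_matchingsE : num_induced_matchings e = nim_in setT.
Proof. by apply: eq_card => D; rewrite !inE subsetT. Qed.

Lemma nim_in_gt0 S : (0 < nim_in S)%N.
Proof.
apply/card_gt0P; exists set0; rewrite inE sub0set.
by apply/induced_matchingP => x; rewrite inE.
Qed.

Lemma nim_in0 : nim_in set0 = 1%N.
Proof.
apply/eqP/cards1P; exists set0; apply/setP => D; rewrite !inE subset0.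
by case: eqP => // ->; apply/induced_matchingP => x; rewrite inE.
Qed.

Lemma nim_inD1 S v : nim_in S = (nim_in (S :\ v) + nim_at S v)%N.
Proof.
rewrite /nim_in /nim_at -(cardsID [set D : {set T} | v \notin D]).
congr (_ + _)%N; apply: eq_card => D; rewrite !inE ?subsetD1 ?negbK;
  by case: (v \in D); case: (D \subset S); case: (induced_matching e D).
Qed.

Lemma nim_at_isolated S v : nbrs_in e S v = set0 -> nim_at S v = 0%N.
Proof.
move=> S0; apply/eqP; rewrite cards_eq0; apply/eqP/setP => D; rewrite !inE.
apply/negP => /andP[/andP[DS /induced_matchingP im] /im].
by move: (subset_leq_card (nbrs_inS v DS)); rewrite S0 cards0 leqn0 => /eqP ->.
Qed.

Lemma leaf_matched S D v u : nbrs_in e S v = [set u] -> D \in im_in S -> v \in D ->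
  nbrs_in e D v = [set u] /\ nbrs_in e D u = [set v].
Proof.
rewrite inE => Sv /andP[DS /induced_matchingP im] vD.
have Dv : nbrs_in e D v = [set u].
  by apply/eqP; rewrite eqEcard cards1 im // -Sv nbrs_inS.
have : u \in nbrs_in e D v by rewrite Dv set11.
rewrite inE => /andP[uD evu].
split=> //; apply/eqP; rewrite eq_sym eqEcard sub1set inE vD esym evu.
by rewrite cards1 im.
Qed.

Lemma leaf_partner_isolated S D v u x :
  nbrs_in e S v = [set u] -> D \in im_in S -> v \in D ->
  x \in D :\: [set u; v] -> nbrs_in e [set u; v] x = set0.
Proof.
move=> Sv DS vD; have [Dv Du] := leaf_matched Sv DS vD.
rewrite !inE negb_or => /andP[/andP[xu xv] xD].
apply/setP => y; rewrite !inE; apply/negP => /andP[/orP[]/eqP-> exy].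
  by have := xv; rewrite -in_set1 -Du inE xD (esym u) exy.
by have := xu; rewrite -in_set1 -Dv inE xD (esym v) exy.
Qed.

(* An induced matching through the leaf v contains the pair {u, v}; removing
   it leaves an induced matching that avoids u and all its neighbours. *)
Lemma nim_at_leaf S v u : nbrs_in e S v = [set u] ->
  (nim_at S v <= nim_in [set x in S | (x != u) && ~~ e u x])%N.
Proof.
move=> Sv; set P := [set u; v]; set G := [set D in im_in S | v \in D].
have PD D : D \in G -> P \subset D.
  rewrite inE => /andP[DS vD]; have [Dv _] := leaf_matched Sv DS vD.
  have : u \in nbrs_in e D v by rewrite Dv set11.
  by rewrite inE subUset !sub1set vD => /andP[->].
have inj : {in G &, injective (fun D => D :\: P)}.
  move=> D1 D2 /PD P1 /PD P2 /= E.
  by rewrite -(setID D1 P) -(setID D2 P) (setIidPr P1) (setIidPr P2) E.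
rewrite /nim_at -/G -(card_in_imset inj); apply: subset_leq_card.
apply/subsetP => _ /imsetP[D GD ->]; move: (GD); rewrite inE => /andP[DS vD].
have rest x := leaf_partner_isolated Sv DS vD (x := x).
move: DS; rewrite !inE => /andP[/subsetP DS /induced_matchingP im].
apply/andP; split.
  apply/subsetP => x xDP; have := rest x xDP; move: xDP; rewrite !inE negb_or.
  move=> /andP[/andP[xu _] /DS ->] /setP/(_ u); rewrite !inE eqxx esym xu /=.
  by move->.
apply/induced_matchingP => x xDP; rewrite nbrs_inD ?rest // im //.
by move: xDP; rewrite inE => /andP[].
Qed.

Lemma nim_in_le_nim_at_edge (S S' : {set T}) u v : e u v -> S' :|: [set u; v] \subset S ->
  (forall x, x \in S' -> nbrs_in e [set u; v] x = set0) ->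
  (nim_in S' <= nim_at S v)%N.
Proof.
move=> euv; rewrite subUset => /andP[S'S PS] far; set P := [set u; v].
have no_edge x y : x \in P -> y \in S' -> e x y = false.
  move=> xP /far/setP/(_ x); rewrite [in RHS]inE inE xP esym /=.
  by move/negbT/negbTE.
have P_matched x : x \in P -> #|nbrs_in e P x| = 1%N.
  rewrite !inE => /orP[]/eqP->; apply/eqP/cards1P.
    exists v; apply/setP => y; rewrite !inE.
    by have [->|_] := eqVneq y v; [rewrite euv orbT | case: eqVneq => [->|]; rewrite ?eirr].
  exists u; apply/setP => y; rewrite !inE.
  by have [->|_] := eqVneq y u; [rewrite esym euv | case: eqVneq => [->|]; rewrite ?eirr ?andbF].
have P_notin_S' y : y \in P -> y \in S' -> False.
  rewrite !inE => /orP[]/eqP-> yS'.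
    by have := no_edge v u; rewrite !inE eqxx orbT esym euv => /(_ isT yS').
  by have := no_edge u v; rewrite !inE eqxx euv => /(_ isT yS').
have inj : {in im_in S' &, injective (fun D => D :|: P)}.
  move=> D1 D2; rewrite !inE => /andP[/subsetP D1S _] /andP[/subsetP D2S _] E.
  apply/setP => y; have /setP/(_ y) := E; rewrite !(in_setU y _ P).
  case: (boolP (y \in P)) => [yP _|_]; last by rewrite !orbF.
  have notin (D : {set T}) : {subset D <= S'} -> (y \in D) = false.
    by move=> DS; apply/negP => /DS/(P_notin_S' y yP).
  by rewrite (notin D1) ?(notin D2).
rewrite /nim_in -(card_in_imset inj); apply: subset_leq_card.
apply/subsetP => _ /imsetP[D + ->]; rewrite !inE => /andP[DS' /induced_matchingP im].
rewrite eqxx !orbT andbT subUset PS (subset_trans DS' S'S) /=.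
apply/induced_matchingP => x; rewrite inE => /orP[xD|xP].
  by rewrite nbrs_inU ?im // far // (subsetP DS').
rewrite setUC nbrs_inU ?P_matched //; apply/setP => y; rewrite !inE.
by case: (boolP (y \in D)) => //= /(subsetP DS') /(no_edge x y xP) ->.
Qed.
End InducedMatchings.

Definition one_degenerate (T : finType) (e : rel T) :=
  forall S : {set T}, S != set0 -> exists2 v, v \in S & (#|nbrs_in e S v| <= 1)%N.

Section UpperBound.
Local Open Scope ring_scope.
Variables (T : finType) (e : rel T) (R : realDomainType) (alpha : R).
Hypotheses (esym : symmetric e) (eirr : irreflexive e).
Hypotheses (alpha_ge1 : 1 <= alpha) (alpha_sqr_ge2 : 2%:R <= alpha ^+ 2)
  (alpha_cube : alpha ^+ 2 + 1 <= alpha ^+ 3).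

Let alpha_ge0 : 0 <= alpha := le_trans ler01 alpha_ge1.

Lemma alpha_pow_double_le n : alpha ^+ n *+ 2 <= alpha ^+ n.+2.
Proof.
by rewrite -mulr_natl -[n.+2]addn2 exprD mulrC ler_wpM2l ?exprn_ge0.
Qed.

Lemma alpha_pow_rec_le n : alpha ^+ n.+2 + alpha ^+ n <= alpha ^+ n.+3.
Proof.
rewrite -[n.+3]addn3 -[n.+2]addn2 !exprD -[X in _ + X]mulr1 -mulrDr.
by rewrite ler_wpM2l ?exprn_ge0.
Qed.

Lemma nim_in_leaf_le (S : {set T}) v u : v \in S -> nbrs_in e S v = [set u] ->
    (forall X : {set T}, (#|X| < #|S|)%N -> (nim_in e X)%:R <= alpha ^+ #|X|) ->
  (nim_in e S)%:R <= alpha ^+ #|S|.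
Proof.
move=> vS Sv IH; set S1 := S :\ v; set S2 := [set x in S | (x != u) && ~~ e u x].
have : u \in nbrs_in e S v by rewrite Sv set11.
rewrite inE => /andP[uS evu].
have uS1 : u \in S1 by rewrite !inE uS andbT; apply: contraTneq evu => ->; rewrite eirr.
have IH1 (X : {set T}) k : X \subset S1 -> (#|X| <= k)%N -> (nim_in e X)%:R <= alpha ^+ k.
  move=> XS1 Xk; apply: le_trans (ler_weXn2l alpha_ge1 Xk); apply: IH.
  exact: leq_ltn_trans (subset_leq_card XS1) (proper_card (properD1 vS)).
have S2S1 : S2 \subset S1 :\ u.
  apply/subsetP => x; rewrite !inE => /and3P[xS xu euv]; rewrite xu xS andbT /=.
  by apply: contraNneq euv => ->; rewrite esym.
have cS : #|S| = (#|S1 :\ u|).+2 by rewrite (cardsD1 v S) (cardsD1 u S1) vS uS1.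
apply: le_trans (_ : (nim_in e S1)%:R + (nim_in e S2)%:R <= _).
  by rewrite -natrD ler_nat (nim_inD1 _ S v) leq_add2l nim_at_leaf.
rewrite cS; have [N0 | [w]] := set_0Vmem (nbrs_in e S1 u).
  rewrite (nim_inD1 _ S1 u) nim_at_isolated // addn0.
  apply: le_trans (alpha_pow_double_le _); rewrite mulr2n.
  apply: lerD; apply: IH1;
    by rewrite ?subsetDl ?(subset_trans S2S1 (subsetDl _ _)) ?subset_leq_card.
rewrite inE => /andP[wS1 euw].
have wS1u : w \in S1 :\ u.
  by rewrite in_setD1 wS1 andbT; apply: contraTneq euw => ->; rewrite eirr.
have S2S1w : S2 \subset S1 :\ u :\ w.
  apply/subsetP => x xS2; rewrite in_setD1 (subsetP S2S1) // andbT.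
  by move: xS2; rewrite !inE => /and3P[_ _]; apply: contraNneq => ->.
rewrite (cardsD1 w (S1 :\ u)) wS1u; apply: le_trans (alpha_pow_rec_le _).
apply: lerD; apply: IH1; rewrite ?(subset_trans S2S1) ?subsetDl ?subset_leq_card //.
by rewrite (cardsD1 u S1) (cardsD1 w (S1 :\ u)) uS1 wS1u.
Qed.

Lemma nim_in_le_pow : one_degenerate e ->
  forall S : {set T}, (nim_in e S)%:R <= alpha ^+ #|S|.
Proof.
move=> edeg S; have [n] := ubnP #|S|; elim: n S => // n IH S /ltnSE Sn.
have IHS (X : {set T}) : (#|X| < #|S|)%N -> (nim_in e X)%:R <= alpha ^+ #|X|.
  by move=> XS; apply: IH; apply: leq_trans Sn.
have [-> | S0] := eqVneq S set0; first by rewrite nim_in0 cards0 expr0.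
have [v vS] := edeg S S0; rewrite leq_eqVlt ltnS leqn0.
case/orP=> [/cards1P[u Sv] | /eqP/cards0_eq Sv]; first exact: nim_in_leaf_le vS Sv IHS.
rewrite (nim_inD1 _ S v) nim_at_isolated // addn0.
apply: le_trans (IHS _ (proper_card (properD1 vS))) _.
by apply: ler_weXn2l => //; rewrite (cardsD1 v S) vS.
Qed.
End UpperBound.

Section PathDecomposition.
Variables (T : finType) (e : rel T) (B : seq {set T}).
Hypothesis decB : path_decomposition e B.

Definition first_bag x := find (fun X : {set T} => x \in X) B.

Lemma first_bag_le x i : x \in nth set0 B i -> (first_bag x <= i)%N.
Proof. by move=> xi; rewrite leqNgt; apply/negP => /(before_find set0); rewrite xi. Qed.

Lemma edge_in_bag x y : e x y ->
  exists2 i, (i < size B)%N & (x \in nth set0 B i) && (y \in nth set0 B i).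
Proof.
have [_ edg _] := decB; case/edg => X XB xyX.
by exists (index X B); rewrite ?index_mem ?nth_index.
Qed.

Lemma in_bag_of_earlier_first v w i j : (i <= j < size B)%N ->
  v \in nth set0 B i -> w \in nth set0 B j -> (first_bag w <= first_bag v)%N ->
  w \in nth set0 B i.
Proof.
have [cov _ intp] := decB; move=> /andP[ij jB] vi wj wv.
have has_w : has (fun X : {set T} => w \in X) B.
  by have [X XB wX] := cov w; apply/hasP; exists X.
apply: (intp w (first_bag w) i j _ jB (nth_find set0 has_w) wj).
by rewrite ij (leq_trans wv) ?first_bag_le.
Qed.
End PathDecomposition.

Lemma pathwidth1_one_degenerate (T : finType) (e : rel T) :
  irreflexive e -> pathwidth_le e 1 -> one_degenerate e.
Proof.
(* Take v in S whose first bag comes last.  If v had neighbours u, w in S with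
   uv in bag i and vw in bag j >= i, then w, which appears no later than v, would
   also lie in bag i, and that bag would hold u, v and w. *)
move=> eirr [B decB Bsmall] S /set0Pn[v0 v0S].
exists [arg max_(x > v0 in S) first_bag B x]; first by case: arg_maxnP.
case: arg_maxnP => // v vS vmax; rewrite leqNgt; apply/negP.
case/card_gt1P=> [u [w [+ + uw]]]; rewrite !inE => /andP[uS evu] /andP[wS evw].
have [i iB /andP[vi ui]] := edge_in_bag decB evu.
have [j jB /andP[vj wj]] := edge_in_bag decB evw.
wlog ij : u w i j uS wS evu evw iB jB vi ui vj wj uw / (i <= j)%N.
  move=> hw; have [ij|/ltnW ji] := leqP i j; first exact: (hw u w i j).
  by apply: (hw w u j i) => //; rewrite eq_sym.
have wi : w \in nth set0 B i.
  by apply: (in_bag_of_earlier_first decB _ vi wj); [rewrite ij | exact: vmax].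
have := Bsmall _ (mem_nth set0 iB); rewrite leqNgt => /negP; apply.
apply/card_gt2P; exists u, v, w; split; first by split.
split; last by rewrite eq_sym.
  by apply: contraTneq evu => ->; rewrite eirr.
by apply: contraTneq evw => <-; rewrite eirr.
Qed.

Section Path.
Variable n : nat.
Local Notation e := (@path_rel n).

Lemma path_rel_sym : symmetric e.
Proof. by move=> i j; rewrite /path_rel orbC. Qed.

Lemma path_rel_irr : irreflexive e.
Proof. by move=> i; rewrite /path_rel; lia. Qed.

Lemma path_one_degenerate : one_degenerate e.
Proof.
move=> S /set0Pn[v0 v0S]; exists [arg max_(x > v0 in S) val x]; first by case: arg_maxnP.
case: arg_maxnP => // v vS vmax; apply/card_le1_eqP => x y; rewrite !inE.
move=> /andP[/vmax xv evx] /andP[/vmax yv evy]; apply: val_inj.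
by move: xv yv evx evy; rewrite /path_rel /geq /=; lia.
Qed.

Definition prefix k : {set 'I_n} := [set i : 'I_n | i < k].

Lemma prefix_n : prefix n = setT.
Proof. by apply/setP => i; rewrite !inE ltn_ord. Qed.

Lemma nim_in_prefix_rec k : (2 <= k <= n)%N ->
  (nim_in e (prefix k.-1) + nim_in e (prefix (k - 3)) <= nim_in e (prefix k))%N.
Proof.
case/andP=> k2 kn.
have vn : (k.-1 < n)%N by lia.
have un : (k.-2 < n)%N by lia.
pose v := Ordinal vn; pose u := Ordinal un.
rewrite (nim_inD1 _ (prefix k) v).
have -> : prefix k :\ v = prefix k.-1.
  by apply/setP => x; rewrite !inE -val_eqE /=; apply/idP/idP; lia.
rewrite leq_add2l.
apply: (nim_in_le_nim_at_edge path_rel_sym path_rel_irr (u := u)).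
- by rewrite /path_rel /=; lia.
- by apply/subsetP => x; rewrite !inE -!val_eqE /=; lia.
- move=> x; rewrite inE => xk; apply/setP => y; rewrite !inE -!val_eqE /path_rel.
  by apply/negP; rewrite /=; lia.
Qed.
End Path.

(* Narayana's cows sequence (OEIS A000930) shifted by one. *)
Fixpoint narayana (k : nat) : nat :=
  match k with
  | (k'.+2 as k2).+1 => (narayana k2 + narayana k')%N
  | 2 => 2
  | _ => 1
  end.

Lemma narayanaE k : narayana k.+3 = (narayana k.+2 + narayana k)%N.
Proof. by []. Qed.

Lemma narayana_rec k : (2 <= k)%N -> narayana k = (narayana k.-1 + narayana (k - 3))%N.
Proof. by case: k => [|[|[|k]]] // _; rewrite narayanaE /= !subSS subn0. Qed.

Lemma narayana_le_nim_in_prefix n k : (k <= n)%N ->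
  (narayana k <= nim_in (@path_rel n) (prefix n k))%N.
Proof.
elim/ltn_ind: k => k IH kn; have [k2 | ] := leqP 2 k; last first.
  by case: k {IH kn} => [|[|]] // *; apply: nim_in_gt0.
rewrite narayana_rec //; apply: leq_trans (nim_in_prefix_rec _); last by rewrite k2.
by apply: leq_add; apply: IH; lia.
Qed.

Section AlphaBounds.
Local Open Scope ring_scope.
Variables (R : realFieldType) (alpha : R).
Hypotheses (alpha_gt1 : 1 < alpha) (alpha_cubic : alpha ^+ 3 = alpha ^+ 2 + 1).

Lemma alpha_powS3 k : alpha ^+ k.+3 = alpha ^+ k.+2 + alpha ^+ k.
Proof. by rewrite -[k.+3]addn3 -[k.+2]addn2 !exprD alpha_cubic mulrDr mulr1. Qed.

Lemma alpha_ub : alpha <= 1466%:R / 1000%:R.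
Proof.
have := alpha_cubic; rewrite !exprS expr0 !mulr1 => cubic.
rewrite leNgt; apply/negP => c_lt; set c := 1466%:R / 1000%:R : R in c_lt.
have c_gt1 : 1 < c by rewrite /c; lra.
have c_cubic : c * c * c - c * c - 1 > 0 by rewrite /c; lra.
have : 0 < (alpha - c) * (alpha * alpha + alpha * c + c * c - alpha - c).
  by apply: mulr_gt0; rewrite ?subr_gt0 //; nra.
nra.
Qed.

Lemma alpha_sqr_lb : 2%:R <= alpha ^+ 2.
Proof.
have := alpha_cubic; rewrite !exprS expr0 !mulr1 => cubic.
have : 0 <= alpha * alpha * (1466%:R / 1000%:R - alpha).
  by rewrite mulr_ge0 ?subr_ge0 ?alpha_ub // mulr_ge0 // ltW // (lt_trans ltr01).
nra.
Qed.

Lemma alpha_sqr_ub : alpha ^+ 2 <= 215%:R / 100%:R.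
Proof.
have alpha_ge0 : 0 <= alpha by rewrite ltW // (lt_trans ltr01).
by rewrite expr2; apply: le_trans (ler_pM alpha_ge0 alpha_ge0 alpha_ub alpha_ub) _; lra.
Qed.

Lemma narayana_ge_alpha_pow k : (9 <= k)%N -> 89%:R / 100%:R * alpha ^+ k <= (narayana k)%:R.
Proof.
elim/ltn_ind: k => k IH k9.
case: k IH k9 => [|[|[|[|[|[|[|[|[|[|[|[|k]]]]]]]]]]]] IH k9 //; last first.
  rewrite narayanaE natrD alpha_powS3 mulrDr.
  by apply: lerD; apply: IH; lia.
all: move: alpha_ub alpha_sqr_ub (alpha_powS3 0) (alpha_powS3 1) (alpha_powS3 2)
  (alpha_powS3 3) (alpha_powS3 4) (alpha_powS3 5) (alpha_powS3 6) (alpha_powS3 7)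
  (alpha_powS3 8); rewrite expr0 expr1 /= => *; lra.
Qed.
End AlphaBounds.

Local Open Scope ring_scope.

Theorem mainTheorem4 (R : rcfType) (alpha : R)
  (Ha : 1 < alpha < 2) (Hroot : alpha ^+ 3 - alpha ^+ 2 - 1 = 0) :
  (forall (T : finType) (e : rel T), symmetric e -> irreflexive e ->
     pathwidth_le e 1 ->
     (num_induced_matchings e)%:R <= alpha ^+ #|T|)
  /\
  (forall eps : R, 0 < eps -> exists N : nat, forall n : nat, (N <= n)%N ->
     (89%:R / 100%:R) * alpha ^+ n - eps <= (num_induced_matchings (@path_rel n))%:R)
  /\
  (exists c1 c2 : R, [/\ 0 < c1, 0 < c2 &
     exists N : nat, forall n : nat, (N <= n)%N ->
       c1 * alpha ^+ n <= (num_induced_matchings (@path_rel n))%:R <= c2 * alpha ^+ n]).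
Proof.
have alpha_gt1 : 1 < alpha by case/andP: Ha.
have cubic : alpha ^+ 3 = alpha ^+ 2 + 1 by lra.
have upper (T : finType) (e : rel T) : symmetric e -> irreflexive e -> one_degenerate e ->
    (num_induced_matchings e)%:R <= alpha ^+ #|T|.
  move=> esym eirr edeg; rewrite num_induced_matchingsE -cardsT.
  apply: nim_in_le_pow esym eirr (ltW alpha_gt1) (alpha_sqr_lb alpha_gt1 cubic) _ edeg _.
  by rewrite cubic.
have lower n : (9 <= n)%N ->
    89%:R / 100%:R * alpha ^+ n <= (num_induced_matchings (@path_rel n))%:R.
  move=> n9; apply: le_trans (narayana_ge_alpha_pow alpha_gt1 cubic n9) _.
  by rewrite ler_nat num_induced_matchingsE -prefix_n narayana_le_nim_in_prefix.
have path_upper n : (num_induced_matchings (@path_rel n))%:R <= alpha ^+ n.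
  rewrite -[n in alpha ^+ n]card_ord; apply: upper.
  - exact: path_rel_sym.
  - exact: path_rel_irr.
  - exact: path_one_degenerate.
split; first by move=> T e esym eirr /(pathwidth1_one_degenerate eirr); apply: upper.
split; first by move=> eps eps_gt0; exists 9%N => n /lower; lra.
exists (89%:R / 100%:R), 1; split; [lra | lra | exists 9%N => n n9].
by rewrite mul1r lower ?path_upper.
Qed.
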